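(* Let $A$ be a meet-complemented lattice in which $\Box x$ and $\Diamond x$ exist for every $x\in A$. Suppose that for every $a\in A$ the infimum $\bigwedge\{\Box^n a: n\in\mathbb{N}\}$ exists in $A$ (where $\Box^0 a=a$). Then for every $a\in A$, the set $\{b\in A: b\le a \text{ and } b\vee\neg b=1\}$ has a maximum $Ba$, and $Ba=\bigwedge\{\Box^n a: n\in\mathbb{N}\}$.
   Context: A meet-complemented lattice is a lattice $(L,\le)$ (not necessarily distributive) such that for every $a\in L$ the element $\neg a=\max\{b\in L: a\wedge b\le c\ \text{for all } c\in L\}$ exists; it is bounded with bottom $0$ and top $1$. For $a\in L$, $\Box a=\max\{b\in L: a\vee\neg b=1\}$ and $\Diamond a=\min\{b\in L: \neg a\vee b=1\}$. $\mathbb{N}$ includes $0$. $Ba$ denotes the greatest Boolean element (element $b$ with $b\vee\neg b=1$) below $a$. *)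

From HB Require Import structures.
From mathcomp Require Import all_boot all_order.
Set Implicit Arguments. Unset Strict Implicit. Unset Printing Implicit Defensive.
Import Order.TTheory.
Local Open Scope order_scope.

Definition is_greatest (d : Order.disp_t) (T : porderType d) (P : T -> Prop) (m : T) : Prop :=
  P m /\ forall b, P b -> b <= m.

Definition is_least (d : Order.disp_t) (T : porderType d) (P : T -> Prop) (m : T) : Prop :=
  P m /\ forall b, P b -> m <= b.

Definition is_inf (d : Order.disp_t) (T : porderType d) (P : T -> Prop) (m : T) : Prop :=
  is_greatest (fun l => forall x, P x -> l <= x) m.

Definition meet_complement (d : Order.disp_t) (T : tbLatticeType d) (neg : T -> T) : Prop :=
  forall a, is_greatest (fun b => forall c, a `&` b <= c) (neg a).

Definition is_box (d : Order.disp_t) (T : tbLatticeType d) (neg box : T -> T) : Prop :=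
  forall a, is_greatest (fun b => a `|` neg b = \top) (box a).

Definition is_dia (d : Order.disp_t) (T : tbLatticeType d) (neg dia : T -> T) : Prop :=
  forall a, is_least (fun b => neg a `|` b = \top) (dia a).

From HB Require Import structures.
From mathcomp Require Import all_boot all_order.
Import Order.TTheory.
Local Open Scope order_scope.
Set Implicit Arguments.
Unset Strict Implicit.

(* The definitions of box and diamond make them adjoint: dia x <= y iff
   x <= box y.  Hence an element b is Boolean exactly when b <= box b.  A
   Boolean b below c lies below box c (as c \/ neg b >= b \/ neg b = 1),
   so a Boolean b below a lies below every box^n a.
   Conversely, if m is the infimum of the chain, then m <= box^(n+1) a
   gives dia m <= box^n a for every n, so dia m <= m, i.e. m <= box m:
   m is Boolean, and it is then the greatest Boolean element below a. *)

Lemma join_eq_top_le (d : Order.disp_t) (L : tbLatticeType d) (u v w : L) :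
  w <= u -> w `|` v = \top -> u `|` v = \top.
Proof.
by move=> le_wu wv1; apply/eqP; rewrite eq_le lex1 -wv1 leU2.
Qed.

Section MeetComplementedModal.

Variables (d : Order.disp_t) (A : tbLatticeType d) (neg box dia : A -> A).
Hypotheses (hneg : meet_complement neg) (hbox : is_box neg box)
  (hdia : is_dia neg dia).

Lemma le_neg (x y : A) : x <= y -> neg y <= neg x.
Proof.
move=> le_xy; apply: (hneg x).2 => c.
exact: le_trans (leI2 le_xy (lexx (neg y))) ((hneg y).1 c).
Qed.

Lemma le_box (x y : A) : x <= box y <-> y `|` neg x = \top.
Proof.
split=> [le_x_box | ]; last exact: (hbox y).2.
by rewrite joinC (join_eq_top_le (le_neg le_x_box)) // joinC (hbox y).1.
Qed.

Lemma dia_le (x y : A) : dia x <= y <-> neg x `|` y = \top.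
Proof.
split=> [le_dia_y | ]; last exact: (hdia x).2.
by rewrite joinC (join_eq_top_le le_dia_y) // joinC (hdia x).1.
Qed.

Lemma dia_le_box (x y : A) : dia x <= y <-> x <= box y.
Proof.
split=> [/dia_le | /le_box]; rewrite joinC.
  by move/le_box.
by move/dia_le.
Qed.

Lemma boolean_le_box (b : A) : b `|` neg b = \top <-> b <= box b.
Proof. exact: iff_sym (le_box b b). Qed.

Lemma boolean_le_iter_box (a b : A) (n : nat) :
  b <= a -> b `|` neg b = \top -> b <= iter n box a.
Proof.
move=> le_ba bool_b; elim: n => [|n IH] //=.
apply/le_box; exact: join_eq_top_le IH bool_b.
Qed.

Lemma inf_iter_box_boolean (a m : A) :
  is_inf (fun x => exists n : nat, x = iter n box a) m -> m `|` neg m = \top.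
Proof.
move=> [m_lb m_glb]; apply/boolean_le_box/dia_le_box.
apply: m_glb => _ [n ->]; apply/dia_le_box; rewrite -iterS.
by apply: m_lb; exists n.+1.
Qed.

End MeetComplementedModal.

Theorem proposition12 (d : Order.disp_t) (A : tbLatticeType d)
  (neg box dia : A -> A)
  (hneg : meet_complement neg) (hbox : is_box neg box) (hdia : is_dia neg dia)
  (hinf : forall a : A, exists m : A, is_inf (fun x => exists n : nat, x = iter n box a) m) :
  forall a : A, exists Ba : A,
    is_greatest (fun b => b <= a /\ b `|` neg b = \top) Ba /\
    is_inf (fun x => exists n : nat, x = iter n box a) Ba.
Proof.
move=> a; have [m m_inf] := hinf a.
exists m; split=> //; split.
- split; first by apply: m_inf.1; exists 0%N.
  exact: (inf_iter_box_boolean hneg hbox hdia m_inf).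
- move=> b [le_ba bool_b]; apply: m_inf.2 => _ [n ->].
  exact: boolean_le_iter_box.
Qed.
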